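(* Let $x$ be a positive integer and $v=(v_1,v_2,\dots)$ a back tracing parity vector for $x$. Let $p_n$ be the number of $1$'s among $v_1,\dots,v_n$ divided by $n$. Then $\limsup_{n\to\infty}p_n\le\log_3 2$.
   Context: Let $T(z)=z/2$ for $z$ even and $T(z)=(3z+1)/2$ for $z$ odd. A sequence $(v_1,v_2,\dots)\in\{0,1\}^{\mathbb{N}}$ is a back tracing parity vector for a positive integer $x$ if there are positive integers $x_0=x,x_1,x_2,\dots$ with $T(x_i)=x_{i-1}$ and $x_i\equiv v_i\pmod 2$ for all $i\ge1$. *)

From Stdlib Require Import Reals Arith.
Open Scope R_scope.

Definition T (z : nat) : nat :=
  if Nat.even z then Nat.div z 2 else Nat.div (3 * z + 1) 2.

(* v : nat -> bool, with v i (i >= 1) the i-th parity bit (true = 1 = odd);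
   v 0 is unused.  *)
Definition back_tracing_parity_vector (x : nat) (v : nat -> bool) : Prop :=
  exists xs : nat -> nat,
    xs 0%nat = x /\
    forall i : nat, (1 <= i)%nat ->
      (0 < xs i)%nat /\ T (xs i) = xs (i - 1)%nat /\ Nat.odd (xs i) = v i.

Fixpoint ones_count (v : nat -> bool) (n : nat) : nat :=
  match n with
  | O => O
  | S m => (ones_count v m + (if v (S m) then 1 else 0))%nat
  end.

Definition p (v : nat -> bool) (n : nat) : R := INR (ones_count v n) / INR n.

(* limsup_{n -> oo} u_n <= L, unfolded (for sequences bounded above, as here). *)
Definition limsup_le (u : nat -> R) (L : R) : Prop :=
  forall eps : R, 0 < eps -> exists N : nat, forall n : nat, (N <= n)%nat -> u n <= L + eps.

From Stdlib Require Import Reals Arith Lia Lra.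
Open Scope R_scope.

(* Going one step backwards along the orbit multiplies the
   current value by 2 (an even step, x_{i-1} = x_i / 2) or by 2/3 minus a
   positive correction (an odd step, x_{i-1} = (3 x_i + 1) / 2).  Hence, with
   k_n the number of odd steps among the first n,
       3^{k_n} * x_n <= 2^n * x,   so   3^{k_n} <= x * 2^n   as x_n >= 1.
   Taking logarithms gives  p_n = k_n / n <= ln 2 / ln 3 + (ln x / ln 3) / n,
   and a bound of the form  L + C / n  forces  limsup p_n <= L. *)

Lemma T_odd_double (z : nat) : Nat.odd z = true -> (2 * T z = 3 * z + 1)%nat.
Proof.
  intro Hodd. unfold T. rewrite <- Nat.negb_odd, Hodd; cbn [negb].
  apply Nat.odd_spec in Hodd. destruct Hodd as [m ->].
  replace (3 * (2 * m + 1) + 1)%nat with ((3 * m + 2) * 2)%nat by lia.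
  rewrite Nat.div_mul by lia. lia.
Qed.

Lemma T_even_double (z : nat) : Nat.odd z = false -> (2 * T z = z)%nat.
Proof.
  intro Hodd. unfold T. rewrite <- Nat.negb_odd, Hodd; cbn [negb].
  assert (Heven : Nat.even z = true) by (rewrite <- Nat.negb_odd, Hodd; reflexivity).
  apply Nat.even_spec in Heven. destruct Heven as [m ->].
  rewrite (Nat.mul_comm 2 m), Nat.div_mul by lia. lia.
Qed.

(* Along any back-traced orbit x = x_0, x_1, x_2, ... with parities v_i,
   each odd step costs a factor 3 and each step gains at most a factor 2. *)
Lemma backward_orbit_bound (x : nat) (v : nat -> bool) (xs : nat -> nat) :
  xs 0%nat = x ->
  (forall i : nat, (1 <= i)%nat ->
      T (xs i) = xs (i - 1)%nat /\ Nat.odd (xs i) = v i) ->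
  forall n : nat, (3 ^ ones_count v n * xs n <= x * 2 ^ n)%nat.
Proof.
  intros Hstart Hstep. induction n as [|n IH]; [simpl; lia|].
  destruct (Hstep (S n) ltac:(lia)) as [HT Hpar].
  replace (S n - 1)%nat with n in HT by lia.
  simpl ones_count. rewrite Nat.pow_succ_r'.
  destruct (v (S n)).
  - pose proof (T_odd_double _ Hpar) as E. rewrite HT in E.
    rewrite Nat.add_1_r, Nat.pow_succ_r'.
    assert (E3 : (3 ^ ones_count v n * (2 * xs n)
                  = 3 ^ ones_count v n * (3 * xs (S n) + 1))%nat) by now rewrite E.
    nia.
  - pose proof (T_even_double _ Hpar) as E. rewrite HT in E.
    rewrite Nat.add_0_r. nia.
Qed.

(* Since the orbit stays positive, the number of 1's is controlled by x. *)
Lemma ones_count_pow_bound (x : nat) (v : nat -> bool) :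
  (0 < x)%nat -> back_tracing_parity_vector x v ->
  forall n : nat, (3 ^ ones_count v n <= x * 2 ^ n)%nat.
Proof.
  intros Hx [xs [Hstart Hstep]] n.
  pose proof (backward_orbit_bound x v xs Hstart
                (fun i Hi => proj2 (Hstep i Hi)) n) as Hbound.
  assert (Hpos : (0 < xs n)%nat).
  { destruct n as [|n]; [now rewrite Hstart|]. apply (Hstep (S n)). lia. }
  nia.
Qed.

Lemma ln_le (a b : R) : 0 < a -> a <= b -> ln a <= ln b.
Proof.
  intros Ha [Hlt | ->]; [left; apply ln_increasing; assumption | lra].
Qed.

Lemma ln_of_pow_bound (a b x k n : nat) :
  (0 < a)%nat -> (0 < b)%nat -> (0 < x)%nat ->
  (a ^ k <= x * b ^ n)%nat ->
  INR k * ln (INR a) <= ln (INR x) + INR n * ln (INR b).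
Proof.
  intros Ha Hb Hx Hbound.
  assert (Ha' : 0 < INR a) by (apply lt_0_INR; lia).
  assert (Hb' : 0 < INR b) by (apply lt_0_INR; lia).
  assert (Hx' : 0 < INR x) by (apply lt_0_INR; lia).
  apply le_INR in Hbound. rewrite mult_INR, !pow_INR in Hbound.
  apply ln_le in Hbound; [|apply pow_lt; assumption].
  rewrite ln_mult, !ln_pow in Hbound by (try apply pow_lt; assumption).
  exact Hbound.
Qed.

Lemma limsup_le_of_rate (u : nat -> R) (L C : R) :
  0 <= C ->
  (forall n : nat, (0 < n)%nat -> u n <= L + C / INR n) ->
  limsup_le u L.
Proof.
  intros HC Hrate eps Heps.
  destruct (INR_unbounded (C / eps)) as [N HN].
  exists (S N). intros n Hn.
  assert (HNn : INR N <= INR n) by (apply le_INR; lia).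
  assert (Hn0 : 0 < INR n) by (apply lt_0_INR; lia).
  assert (HCn : C <= eps * INR n).
  { assert (HCeps : C = eps * (C / eps)) by (field; lra). nra. }
  assert (Hsmall : C / INR n <= eps).
  { apply Rmult_le_reg_r with (INR n); [assumption|].
    replace (C / INR n * INR n) with C by (field; lra). lra. }
  specialize (Hrate n ltac:(lia)). lra.
Qed.

Theorem mainTheorem9 (x : nat) (v : nat -> bool) :
  (0 < x)%nat ->
  back_tracing_parity_vector x v ->
  limsup_le (p v) (ln 2 / ln 3).
Proof.
  intros Hx Hv.
  assert (Hln3 : 0 < ln 3) by (rewrite <- ln_1; apply ln_increasing; lra).
  assert (Hlnx : 0 <= ln (INR x))
    by (rewrite <- ln_1; apply ln_le; [lra | apply (le_INR 1); lia]).
  apply (limsup_le_of_rate _ _ (ln (INR x) / ln 3)).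
  { unfold Rdiv. apply Rmult_le_pos; [assumption | left; apply Rinv_0_lt_compat; assumption]. }
  intros n Hn.
  assert (Hn' : 0 < INR n) by (apply lt_0_INR; lia).
  (* k_n ln 3 <= ln x + n ln 2, then divide by n ln 3 *)
  pose proof (ln_of_pow_bound 3 2 x (ones_count v n) n ltac:(lia) ltac:(lia) Hx
                (ones_count_pow_bound x v Hx Hv n)) as Hlog.
  replace (INR 3) with 3 in Hlog by (simpl; lra).
  replace (INR 2) with 2 in Hlog by (simpl; lra).
  unfold p. apply Rmult_le_reg_r with (INR n * ln 3); [nra|].
  field_simplify; [lra | lra | lra].
Qed.
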